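(* Let $\alpha\in\mathbb{C}\smallsetminus\{0,1\}$. The irreducible curves of negative self-intersection on $Y_\alpha$ are precisely the exceptional curves $E(0,0)$, $E(1,i)$, $E(\alpha,\alpha i)$, $E(1,-i)$, $E(\alpha,-\alpha i)$ and the strict transforms of the lines $x+iy=0$, $x-iy=0$, $x-z=0$, $(\alpha+1)x+(\alpha-1)iy-2\alpha z=0$, $(\alpha+1)x-(\alpha-1)iy-2\alpha z=0$ and $x-\alpha z=0$.
   Context: $Y_\alpha$ is the blow-up of $\mathbb{P}^2_{\mathbb{C}}$ (coordinates $[x:y:z]$, affine chart $z=1$ with coordinates $(x,y)$) in the five points $(0,0)$, $(1,i)$, $(\alpha,\alpha i)$, $(1,-i)$, $(\alpha,-\alpha i)$; $E(P)$ denotes the exceptional curve over the point $P$. *)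

From HB Require Import structures.
From mathcomp Require Import all_boot all_order all_algebra.
From mathcomp Require Import complex.
From mathcomp Require Import Rstruct.
From mathcomp Require Import mpoly.
Set Implicit Arguments. Unset Strict Implicit. Unset Printing Implicit Defensive.
Import Order.TTheory GRing.Theory Num.Theory.
Local Open Scope ring_scope.

Definition C : Type := complex Rdefinitions.R.
HB.instance Definition _ := GRing.Field.on C.
HB.instance Definition _ := Num.ClosedField.on C.

(* Homogeneous polynomials in the projective coordinates x, y, z of P^2. *)
Notation poly3 := {mpoly C[3]}.
Definition i0 : 'I_3 := @Ordinal 3 0 isT.
Definition i1 : 'I_3 := @Ordinal 3 1 isT.
Definition i2 : 'I_3 := @Ordinal 3 2 isT.
Definition X : poly3 := 'X_i0.
Definition Y : poly3 := 'X_i1.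
Definition Z : poly3 := 'X_i2.

Definition pdeg (F : poly3) : nat := (msize F).-1.

Definition irreducible3 (F : poly3) : Prop :=
  (1 < msize F)%N /\
  forall G H : poly3, F = G * H -> (msize G <= 1)%N \/ (msize H <= 1)%N.

Definition plane_curve (F : poly3) : Prop :=
  F \is (pdeg F).-homog /\ irreducible3 F.

(* Multiplicity of F at the point [a : b : 1]: the order of vanishing at the
   origin of F(x + a, y + b, z + 1), i.e. the least degree of a monomial
   occurring in the translated polynomial. *)
Definition mult (F : poly3) (P : C * C) : nat :=
  let G := F \mPo [tuple X + P.1%:MP; Y + P.2%:MP; Z + 1%:MP] in
  foldr (fun m acc => minn (mdeg m) acc) (msize G) (msupp G).

(* The five blown-up points (in the affine chart z = 1). *)
Definition bpt (a : C) (k : 'I_5) : C * C :=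
  nth (0, 0) [:: (0, 0); (1, 'i); (a, a * 'i); (1, - 'i); (a, - (a * 'i))] k.

(* Irreducible curves on Y_a: either an exceptional curve E(P_k), or the strict
   transform of an irreducible plane curve F = 0 (F up to nonzero scalar). *)
Inductive curve : Type :=
  | Exc of 'I_5
  | Strict of poly3.

Definition is_curve (c : curve) : Prop :=
  match c with
  | Exc _ => True
  | Strict F => plane_curve F
  end.

Definition selfint (a : C) (c : curve) : int :=
  match c with
  | Exc _ => -1
  | Strict F => ((pdeg F ^ 2)%N)%:Z - (\sum_(k < 5) (mult F (bpt a k) ^ 2)%N)%:Z
  end.

Definition lines (a : C) : seq poly3 :=
  [:: X + 'i%:MP * Y;
      X - 'i%:MP * Y;
      X - Z;
      (a + 1)%:MP * X + ((a - 1) * 'i)%:MP * Y - (2 * a)%:MP * Z;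
      (a + 1)%:MP * X - ((a - 1) * 'i)%:MP * Y - (2 * a)%:MP * Z;
      X - a%:MP * Z].

From HB Require Import structures.
From mathcomp Require Import all_boot all_order all_algebra.
From mathcomp Require Import complex Rstruct mpoly.
From mathcomp Require Import ring zify.
Import Order.TTheory GRing.Theory Num.Theory.
Local Open Scope ring_scope.
Set Implicit Arguments. Unset Strict Implicit. Unset Printing Implicit Defensive.

(* Each of the six lines passes through two of the five points, so its strict
   transform has self-intersection at most 1 - 2.  Conversely, restrict a
   plane curve F of degree d to a line l: this gives a polynomial of degree at
   most d vanishing to order at least m_P(F) at every point P of l, and it is
   identically zero only if the equation of l divides F.  So an irreducible F
   which is none of the six lines satisfies sum_(P in l) m_P(F) <= d for each
   of them; two of the lines contain three of the points and four contain two,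
   and these six inequalities force sum_P m_P(F)^2 <= d^2. *)

Section MmapComp.
Variables (n k : nat) (R S : comNzRingType) (f : {rmorphism R -> S}).

Lemma eq_mmap (h h' : 'I_k -> S) (p : {mpoly R[k]}) :
  h =1 h' -> mmap f h p = mmap f h' p.
Proof. by move=> eq_h; apply: eq_bigr => m _; rewrite (mmap1_eq _ eq_h). Qed.

Lemma mmap_comp_mpoly (h : 'I_k -> S) (p : {mpoly R[n]})
    (lq : n.-tuple {mpoly R[k]}) :
  mmap f h (p \mPo lq) = mmap f (fun i => mmap f h (tnth lq i)) p.
Proof.
rewrite comp_mpolyE rmorph_sum; apply: eq_bigr => m _.
rewrite -mul_mpolyC rmorphM /= mmapC rmorph_prod; congr (_ * _).
by apply: eq_bigr => i _; rewrite rmorphXn.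
Qed.

End MmapComp.

Section RootMultiplicities.
Variable F : fieldType.

Lemma dvdp_prod_XsubC_mup (r : {poly F}) (ts : seq F) :
  uniq ts -> \prod_(t <- ts) ('X - t%:P) ^+ mup t r %| r.
Proof.
have [->|r0] := eqVneq r 0; first by rewrite dvdp0.
elim: ts => [|t ts IH] /=; first by rewrite big_nil dvd1p.
case/andP=> t_ts /IH dvd_ts; rewrite big_cons Gauss_dvdp ?dvd_ts ?andbT.
  by rewrite -mup_geq.
apply: coprimep_expl; rewrite coprimep_sym coprimep_XsubC rootE horner_prod.
rewrite prodf_seq_neq0; apply/allP => s s_ts /=.
rewrite horner_exp hornerXsubC expf_neq0 // subr_eq0.
by apply: contraNneq t_ts => ->.
Qed.

Lemma sum_mup_lt_size (r : {poly F}) (ts : seq F) :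
  r != 0 -> uniq ts -> (\sum_(t <- ts) mup t r < size r)%N.
Proof.
move=> r0 uts; have := dvdp_leq r0 (dvdp_prod_XsubC_mup r uts).
rewrite size_prod_seq => [|t _]; last by rewrite expf_neq0 // polyXsubC_eq0.
under eq_bigr do rewrite size_exp_XsubC -addn1.
by rewrite big_split /= sum1_size -addSn addnK.
Qed.

End RootMultiplicities.

Lemma foldr_minn_le (T : eqType) (g : T -> nat) z (s : seq T) x :
  x \in s -> (foldr (fun y acc => minn (g y) acc) z s <= g x)%N.
Proof.
elim: s => [|y s IH] //=; rewrite inE => /orP[/eqP->|xs]; first exact: geq_minl.
exact: leq_trans (geq_minr _ _) (IH xs).
Qed.

Lemma leq_foldr_minn (T : eqType) (g : T -> nat) z (s : seq T) n :
  (n <= z)%N -> {in s, forall x, n <= g x}%N ->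
  (n <= foldr (fun y acc => minn (g y) acc) z s)%N.
Proof.
move=> nz; elim: s => [|y s IH] //= gs.
by rewrite leq_min gs ?mem_head ?IH // => x xs; rewrite gs // inE xs orbT.
Qed.

Lemma big_ord3 (R : Type) (idx : R) (op : Monoid.law idx) (F : 'I_3 -> R) :
  \big[op/idx]_(i < 3) F i = op (op (F i0) (F i1)) (F i2).
Proof.
rewrite !big_ord_recl big_ord0 Monoid.mulm1 Monoid.mulmA.
by congr (op (op (F _) (F _)) (F _)); apply: val_inj.
Qed.

Lemma ord3P (i : 'I_3) : [\/ i = i0, i = i1 | i = i2].
Proof.
by case: i => [[|[|[|//]]] lti]; [constructor 1|constructor 2|constructor 3];
  apply: val_inj.
Qed.

Lemma mnm3P (m m' : 'X_{1..3}) :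
  m i0 = m' i0 -> m i1 = m' i1 -> m i2 = m' i2 -> m = m'.
Proof. by move=> e0 e1 e2; apply/mnmP => i; case: (ord3P i) => ->. Qed.

Definition mk3 (x y z : C) (i : 'I_3) : C := nth 0 [:: x; y; z] i.

Definition dot (u v : 'I_3 -> C) : C := \sum_i u i * v i.

Definition cross (u v : 'I_3 -> C) : 'I_3 -> C :=
  mk3 (u i1 * v i2 - u i2 * v i1) (u i2 * v i0 - u i0 * v i2)
      (u i0 * v i1 - u i1 * v i0).

Definition hpt (P : C * C) : 'I_3 -> C := mk3 P.1 P.2 1.

Definition hdir (P Q : C * C) : 'I_3 -> C := mk3 (Q.1 - P.1) (Q.2 - P.2) 0.

Definition lerp (P Q : C * C) (t : C) : C * C :=
  (P.1 + t * (Q.1 - P.1), P.2 + t * (Q.2 - P.2)).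

Definition lform (v : 'I_3 -> C) : poly3 := \sum_i v i *: 'X_i.

Definition line_through (P Q : C * C) : poly3 := lform (cross (hpt P) (hpt Q)).

Lemma dotE u v : dot u v = u i0 * v i0 + u i1 * v i1 + u i2 * v i2.
Proof. exact: big_ord3. Qed.

Lemma dot_crossl u v : dot (cross u v) u = 0.
Proof. by rewrite dotE /cross /mk3 /=; ring. Qed.

Lemma dot_crossr u v : dot (cross u v) v = 0.
Proof. by rewrite dotE /cross /mk3 /=; ring. Qed.

Lemma lerp0 P Q : lerp P Q 0 = P.
Proof. by case: P => x y; rewrite /lerp !mul0r !addr0. Qed.

Lemma lerp1 P Q : lerp P Q 1 = Q.
Proof. by case: Q => x y; rewrite /lerp /=; congr (_, _); ring. Qed.

Lemma lformE v : lform v = v i0 *: X + v i1 *: Y + v i2 *: Z.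
Proof. exact: big_ord3. Qed.

Lemma eq_lform u v : u =1 v -> lform u = lform v.
Proof. by move=> eq_uv; apply: eq_bigr => i _; rewrite eq_uv. Qed.

Lemma mcoeff_lform v i : (lform v)@_U_(i) = v i.
Proof.
rewrite lformE /X /Y /Z !mcoeffD !mcoeffZ !mcoeffX !eq_mnm1.
by case: (ord3P i) => ->; rewrite /= ?mulr1 ?mulr0 ?addr0 ?add0r.
Qed.

Lemma lform_neq0 v i : v i != 0 -> lform v != 0.
Proof. by apply: contraNneq => v0; rewrite -(mcoeff_lform v i) v0 mcoeff0. Qed.

Lemma dhomog_lform v : lform v \is 1.-homog.
Proof.
apply: rpred_sum => i _; apply: rpredZ.
by rewrite dhomogX /= mdeg1.
Qed.

Lemma msize_dhomog1 (L : poly3) : L != 0 -> L \is 1.-homog -> msize L = 2.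
Proof.
move=> L0 homL; have := dhomog_uniq L0 (dhomog_msize homL) homL.
have : (0 < msize L)%N by rewrite lt0n msize_poly_eq0.
by case: (msize L) => [|[|[]]].
Qed.

Lemma comp_lform v (lq : 3.-tuple poly3) :
  lform v \mPo lq = \sum_i v i *: tnth lq i.
Proof.
rewrite raddf_sum; apply: eq_bigr => i _.
by apply: etrans (comp_mpolyZ _ _ _) _; rewrite comp_mpolyXU -tnth_nth.
Qed.

Lemma mmap_lform (S : comNzRingType) (f : {rmorphism C -> S}) h v :
  mmap f h (lform v) = \sum_i f (v i) * h i.
Proof.
rewrite raddf_sum /=; apply: eq_bigr => i _.
by rewrite mmapZ mmapX mmap1U.
Qed.

Definition restr_line (u v : 'I_3 -> C) (F : poly3) : {poly C} :=
  mmap (@polyC C) (fun i => (u i)%:P + (v i)%:P * 'X) F.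

Definition lsubst (M : 'M[C]_3) : 3.-tuple poly3 :=
  [tuple lform (fun k => M i k) | i < 3].

Lemma comp_lsubst p M N :
  (p \mPo lsubst M) \mPo lsubst N = p \mPo lsubst (M *m N).
Proof.
rewrite {1}/comp_mpoly mmap_comp_mpoly; apply: eq_mmap => i.
rewrite -/(comp_mpoly _ _) !tnth_mktuple comp_lform /lform.
under eq_bigr do rewrite tnth_mktuple scaler_sumr.
rewrite exchange_big /=; apply: eq_bigr => l _.
by rewrite mxE scaler_suml; apply: eq_bigr => k _; rewrite scalerA.
Qed.

Lemma comp_lsubst1 p : p \mPo lsubst 1%:M = p.
Proof.
rewrite -[RHS](comp_mpoly_id p); congr comp_mpoly; apply: eq_from_tnth => i.
rewrite !tnth_mktuple /lform (bigD1 i) //= mxE eqxx scale1r big1 ?addr0 //.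
by move=> k /negbTE; rewrite mxE eq_sym => ->; rewrite scale0r.
Qed.

Lemma dhomog_comp_lsubst d F M :
  F \is d.-homog -> F \mPo lsubst M \is d.-homog.
Proof.
move=> homF; rewrite comp_mpolyE big_seq.
apply: rpred_sum => m mF; apply: rpredZ.
have <- : mdeg m = d by apply: dhomog_mf homF m mF.
rewrite mdegE !big_ord3.
have homX i : tnth (lsubst M) i ^+ m i \is (m i).-homog.
  have := dhomogMn (m i) (dhomog_lform (fun k => M i k)).
  by rewrite mul1n tnth_mktuple.
by apply: dhomogM; [apply: dhomogM|]; apply: homX.
Qed.

Definition frame (u v w : 'I_3 -> C) : 'M[C]_3 :=
  \matrix_(i, k) mk3 (u i) (v i) (w i) k.

Definition coframe (u v w : 'I_3 -> C) : 'M[C]_3 :=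
  \matrix_(k, j)
    (mk3 (cross v w j) (cross w u j) (cross u v j) k / dot (cross u v) w).

Lemma mulmx_frame_coframe u v w :
  dot (cross u v) w != 0 -> frame u v w *m coframe u v w = 1%:M.
Proof.
move=> uvw0; apply/matrixP => i j; rewrite !mxE big_ord3 !mxE.
move: uvw0; rewrite dotE /cross /mk3 /=.
by case: (ord3P i) => ->; case: (ord3P j) => -> /= uvw0; field.
Qed.

Lemma restr_line_comp_frame u v w F :
  restr_line (mk3 1 0 0) (mk3 0 1 0) (F \mPo lsubst (frame u v w)) =
  restr_line u v F.
Proof.
rewrite /restr_line /comp_mpoly mmap_comp_mpoly; apply: eq_mmap => i.
rewrite tnth_mktuple mmap_lform big_ord3 !mxE /mk3 /=.
by rewrite polyC0 polyC1; ring.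
Qed.

Lemma mmap1_lineZ0 m :
  mmap1 (fun i => (mk3 1 0 0 i)%:P + (mk3 0 1 0 i)%:P * 'X) m =
  if m i2 == 0%N then 'X^(m i1) else 0.
Proof.
rewrite /mmap1 big_ord3 /mk3 /= polyC0 polyC1 !(mul0r, mul1r, addr0, add0r).
by rewrite expr1n mul1r expr0n; case: eqP; rewrite ?mulr1 ?mulr0.
Qed.

Lemma coef_restr_lineZ0 d G m :
  G \is d.-homog -> m \in msupp G -> m i2 = 0%N ->
  (restr_line (mk3 1 0 0) (mk3 0 1 0) G)`_(m i1) = G@_m.
Proof.
move=> homG mG m2; have degm := dhomog_mf homG mG.
rewrite /restr_line coef_sum (bigD1_seq m) ?msupp_uniq //=.
rewrite coefCM mmap1_lineZ0 m2.
rewrite eqxx coefXn eqxx mulr1 big1_seq ?addr0 // => m' /andP[m'm m'G].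
rewrite coefCM mmap1_lineZ0; case: eqP => m'2; last by rewrite coef0 mulr0.
rewrite coefXn; case: eqP => m'1; last by rewrite mulr0.
have := dhomog_mf homG m'G; move: degm m'm; rewrite /= !mdegE !big_ord3.
by move=> /= degm /eqP m'm degm'; case: m'm; apply: mnm3P; lia.
Qed.

Lemma restr_lineZ0_eq0_dvd d G : G \is d.-homog ->
  restr_line (mk3 1 0 0) (mk3 0 1 0) G = 0 -> exists H, G = Z * H.
Proof.
move=> homG G0.
have m2_neq0 m : m \in msupp G -> m i2 != 0%N.
  move=> mG; apply/eqP => m2; move: (mG).
  by rewrite mcoeff_msupp -(coef_restr_lineZ0 homG mG m2) G0 coef0 eqxx.
exists (\sum_(m <- msupp G) G@_m *: 'X_[m - U_(i2)]).
rewrite {1}(mpolyE G) mulr_sumr !big_seq; apply: eq_bigr => m mG.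
by rewrite -scalerAr -mpolyXD addmC submK // lep1mP m2_neq0.
Qed.

Lemma exists_dot_neq0 c : (exists k, c k != 0) -> exists w, dot c w != 0.
Proof.
case=> k ck; exists (fun i => (i == k)%:R).
rewrite /dot (bigD1 k) //= eqxx mulr1 big1 ?addr0 // => i /negbTE->.
by rewrite mulr0.
Qed.

(* In the coordinates given by [frame u v w] the line through [u] and [v]
   becomes z = 0. *)
Lemma restr_line_eq0_dvd d F u v :
  F \is d.-homog -> (exists k, cross u v k != 0) ->
  restr_line u v F = 0 -> exists H, F = lform (cross u v) * H.
Proof.
move=> homF /exists_dot_neq0[w uvw0] F0.
set M := frame u v w; set N := coframe u v w.
have [H GE] : exists H, F \mPo lsubst M = Z * H.
  apply: restr_lineZ0_eq0_dvd (dhomog_comp_lsubst M homF) _.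
  by rewrite restr_line_comp_frame.
have ZN : Z \mPo lsubst N = (dot (cross u v) w)^-1 *: lform (cross u v).
  rewrite comp_mpolyXU -tnth_nth tnth_mktuple scaler_sumr; apply: eq_bigr => j _.
  by rewrite scalerA !mxE /mk3 /= mulrC.
exists ((dot (cross u v) w)^-1 *: (H \mPo lsubst N)).
rewrite -[F]comp_lsubst1 -(mulmx_frame_coframe uvw0) -comp_lsubst GE.
by rewrite rmorphM /= ZN -scalerAl scalerAr.
Qed.

Lemma size_restr_line u v F : (size (restr_line u v F) <= msize F)%N.
Proof.
apply: leq_trans (size_sum _ _ _) _; apply/bigmax_leqP_seq => m mF _.
rewrite mul_polyC; apply: leq_trans (size_scale_leq _ _) _.
apply: leq_trans (msize_mdeg_lt mF).
have size_pow i : (size (((u i)%:P + (v i)%:P * 'X) ^+ m i)%R <= (m i).+1)%N.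
  have size_lin : (size ((u i)%:P + (v i)%:P * 'X)%R <= 2)%N.
    apply: leq_trans (size_polyD _ _) _.
    rewrite geq_max (leq_trans (size_polyC_leq1 _)) //.
    apply: leq_trans (size_mul_leq _ _) _.
    by rewrite size_polyX addn2; apply: size_polyC_leq1.
  apply: leq_trans (size_poly_exp_leq _ _) _; move: size_lin.
  by case: (size _) => [|[|[]]] //= _; rewrite ?mul0n ?mul1n.
apply: leq_trans (size_poly_prod_leq _ _) _.
rewrite mdegE card_ord !big_ord3 /=.
move: (size_pow i0) (size_pow i1) (size_pow i2).
by move: (size _) (size _) (size _) => s0 s1 s2; lia.
Qed.

(* After translating [lerp P Q t] to the origin, every monomial has degree at
   least [mult F (lerp P Q t)] and restricts to a multiple of ['X - t%:P]
   raised to its degree. *)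
Lemma restr_line_dvd_mult P Q F t :
  ('X - t%:P) ^+ mult F (lerp P Q t) %| restr_line (hpt P) (hdir P Q) F.
Proof.
rewrite /mult; set G := F \mPo _.
pose h i := (hdir P Q i)%:P * ('X - t%:P).
have -> : restr_line (hpt P) (hdir P Q) F = mmap (@polyC C) h G.
  rewrite /G mmap_comp_mpoly; apply: eq_mmap => i.
  by case: (ord3P i) => ->; rewrite /tnth /= /X /Y /Z mmapD mmapX mmap1U mmapC
    /h /hpt /hdir /lerp /mk3 /=; ring.
rewrite /mmap big_seq.
apply: (big_ind (fun q => _ %| q)); [exact: dvdp0 | exact: dvdp_add |].
move=> m mG; apply: dvdp_mull.
apply: dvdp_trans (dvdp_exp2l _ (foldr_minn_le mdeg (msize G) mG)) _.
rewrite mdegE -prodrXr; apply: (big_ind2 (fun p q => p %| q)); first exact: dvd1p.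
  by move=> ? ? ? ?; apply: dvdp_mul.
by move=> i _; apply/dvdp_exp2r/dvdp_mull.
Qed.

Lemma mult_le_mup_restr_line P Q F t : restr_line (hpt P) (hdir P Q) F != 0 ->
  (mult F (lerp P Q t) <= mup t (restr_line (hpt P) (hdir P Q) F))%N.
Proof. by move=> r0; rewrite mup_geq // restr_line_dvd_mult. Qed.

Lemma cross_hpt_hdir P Q : cross (hpt P) (hdir P Q) =1 cross (hpt P) (hpt Q).
Proof.
by move=> i; case: (ord3P i) => ->; rewrite /cross /hpt /hdir /mk3 /=; ring.
Qed.

Lemma cross_hpt_neq0 P Q : P != Q -> exists k, cross (hpt P) (hpt Q) k != 0.
Proof.
case: P Q => [x y] [x' y'] PQ; rewrite /cross /hpt /mk3.
have [eq_y|] := eqVneq y y'; last by exists i0; rewrite /= mulr1 mul1r subr_eq0.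
exists i1; rewrite /= mulr1 mul1r subr_eq0.
by apply: contraNneq PQ => <-; rewrite eq_y.
Qed.

Lemma msize_line_through P Q : P != Q -> msize (line_through P Q) = 2%N.
Proof.
case/cross_hpt_neq0 => k /lform_neq0 L0.
exact: msize_dhomog1 L0 (dhomog_lform _).
Qed.

Lemma sum_mult_on_line_le F P Q ts : plane_curve F -> P != Q -> uniq ts ->
  (exists s, F = s%:MP * line_through P Q) \/
  (\sum_(t <- ts) mult F (lerp P Q t) <= pdeg F)%N.
Proof.
move=> [homF [sizeF irrF]] PQ uts.
have [r0|r0] := eqVneq (restr_line (hpt P) (hdir P Q) F) 0.
  left; have [|H FE] := restr_line_eq0_dvd homF _ r0.
    by case/cross_hpt_neq0: PQ => k; exists k; rewrite cross_hpt_hdir.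
  rewrite (eq_lform (cross_hpt_hdir P Q)) -/(line_through P Q) in FE.
  have [|/msize1_polyC H1] := irrF _ _ FE; first by rewrite msize_line_through.
  by exists H@_0; rewrite {1}FE {1}H1 mulrC.
right; rewrite /pdeg -ltnS (ltn_predK sizeF).
apply: (@leq_ltn_trans (\sum_(t <- ts) mup t (restr_line (hpt P) (hdir P Q) F))).
  by apply: leq_sum => t _; apply: mult_le_mup_restr_line.
exact: leq_trans (sum_mup_lt_size r0 uts) (size_restr_line _ _ _).
Qed.

Lemma mult_on_line2_le F P Q : plane_curve F -> P != Q ->
  (exists s, F = s%:MP * line_through P Q) \/ (mult F P + mult F Q <= pdeg F)%N.
Proof.
move=> CF PQ; have uts : uniq [:: 0; 1 : C] by rewrite /= inE eq_sym oner_eq0.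
have [|] := sum_mult_on_line_le CF PQ uts; first by left.
by rewrite !big_cons big_nil lerp0 lerp1 addn0; right.
Qed.

Lemma mult_on_line3_le F P Q t : plane_curve F -> P != Q -> t != 0 -> t != 1 ->
  (exists s, F = s%:MP * line_through P Q) \/
  (mult F P + mult F Q + mult F (lerp P Q t) <= pdeg F)%N.
Proof.
move=> CF PQ t0 t1.
have uts : uniq [:: 0; 1; t].
  by rewrite /= !inE eq_sym oner_eq0 !negb_or eq_sym t0 eq_sym t1.
have [|] := sum_mult_on_line_le CF PQ uts; first by left.
by rewrite !big_cons big_nil lerp0 lerp1 addn0 addnA; right.
Qed.

Lemma comp_shift_lform v P :
  lform v \mPo [tuple X + P.1%:MP; Y + P.2%:MP; Z + 1%:MP] =
  lform v + (dot v (hpt P))%:MP.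
Proof.
rewrite comp_lform big_ord3 lformE dotE /hpt /mk3 /tnth /= -!mul_mpolyC.
by rewrite !(rmorphD, rmorphM) /=; ring.
Qed.

Lemma mult_lform_gt0 v s P : s != 0 -> lform v != 0 -> dot v (hpt P) = 0 ->
  (0 < mult (s%:MP * lform v) P)%N.
Proof.
move=> s0 v0 vP; rewrite /mult rmorphM /= comp_mpolyC comp_shift_lform vP.
rewrite rmorph0 addr0 mul_mpolyC.
have G0 : s *: lform v != 0 by rewrite scaler_eq0 negb_or s0.
have homG : s *: lform v \is 1.-homog by rewrite rpredZ ?dhomog_lform.
apply: leq_foldr_minn => [|m mG]; first by rewrite msize_dhomog1.
by rewrite (dhomog_mf homG mG).
Qed.

Lemma selfint_lt0_of_two_points a F (k k' : 'I_5) : k != k' -> pdeg F = 1%N ->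
  (0 < mult F (bpt a k))%N -> (0 < mult F (bpt a k'))%N ->
  (selfint a (Strict F) < 0)%R.
Proof.
move=> kk' degF mk mk'.
rewrite /selfint degF subr_lt0 ltz_nat (bigD1 k) //= (bigD1 k') 1?eq_sym //=.
move: mk mk'; set x := mult F _; set y := mult F _.
by move: (\sum_(i < 5 | _) _)%N => z; nia.
Qed.

Lemma selfint_lt0_of_line_through a (k k' : 'I_5) c L s :
  line_through (bpt a k) (bpt a k') = c%:MP * L ->
  k != k' -> bpt a k != bpt a k' -> s != 0 ->
  (selfint a (Strict (s%:MP * L)) < 0)%R.
Proof.
move=> LE kk' PQ s0; have [j /lform_neq0 L0] := cross_hpt_neq0 PQ.
have c0 : c != 0.
  by apply: contraNneq L0 => c0; rewrite -/(line_through _ _) LE c0 mpolyC0 mul0r.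
have sc0 : s / c != 0 by rewrite mulf_neq0 ?invr_eq0.
have -> : s%:MP * L = (s / c)%:MP * line_through (bpt a k) (bpt a k').
  by rewrite LE mulrA -rmorphM /= divfK.
apply: selfint_lt0_of_two_points kk' _ _ _.
- rewrite /pdeg mul_mpolyC msize_dhomog1 ?rpredZ ?dhomog_lform //.
  by rewrite scaler_eq0 negb_or sc0.
- exact: mult_lform_gt0 sc0 L0 (dot_crossl _ _).
- exact: mult_lform_gt0 sc0 L0 (dot_crossr _ _).
Qed.

(* If, say, m1 + m2 >= m3 + m4, then using max m1 m2 + max m3 m4 <= d,
   sum_k mk^2 <= (d - (m1 + m2))^2 + (m1 + m2) * d <= d^2. *)
Lemma sum_sq_le_of_line_bounds (d m0 m1 m2 m3 m4 : nat) :
  (m0 + m1 + m2 <= d -> m0 + m3 + m4 <= d ->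
   m1 + m3 <= d -> m3 + m2 <= d -> m1 + m4 <= d -> m2 + m4 <= d ->
   m0 ^ 2 + m1 ^ 2 + m2 ^ 2 + m3 ^ 2 + m4 ^ 2 <= d ^ 2)%N.
Proof. nia. Qed.

Lemma mulCii : 'i * 'i = -1 :> C.
Proof. by rewrite -expr2 sqrCi. Qed.

Lemma line_through_mk3 P Q c x y z :
  (forall k, cross (hpt P) (hpt Q) k = c * mk3 x y z k) ->
  line_through P Q = c%:MP * (x%:MP * X + y%:MP * Y + z%:MP * Z).
Proof.
move=> E; rewrite /line_through (eq_lform E) lformE /mk3 /= -!mul_mpolyC.
by rewrite !rmorphM /=; ring.
Qed.

Section BlowUp.
Variables (a : C) (a_neq0 : a != 0) (a_neq1 : a != 1).

Lemma bpt_neq (k k' : 'I_5) : k != k' -> bpt a k != bpt a k'.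
Proof.
have iN : ('i == - 'i :> C) = false by apply/negbTE; rewrite eq_sym eqNr neq0Ci.
have aiN : (a * 'i == - (a * 'i)) = false.
  by apply/negbTE; rewrite eq_sym eqNr mulf_neq0 ?neq0Ci.
have [a0 a1] := (negbTE a_neq0, negbTE a_neq1).
case: k k' => [[|[|[|[|[|//]]]]] ?] [[|[|[|[|[|//]]]]] ?] //= _.
all: rewrite xpair_eqE /= negb_and ?(eq_sym 0 1) ?(eq_sym 0 a) ?(eq_sym 1 a).
all: rewrite ?(eq_sym (- 'i)) ?(eq_sym (- (a * 'i))).
all: by rewrite ?eqxx ?oner_eq0 ?a0 ?a1 ?iN ?aiN.
Qed.

Local Notation o n := (@Ordinal 5 n isT).
Local Notation pt n := (bpt a (o n)).

Lemma line_through_lines0 :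
  line_through (pt 0) (pt 1) = (- 'i)%:MP * (lines a)`_0.
Proof.
rewrite (line_through_mk3 (c := - 'i) (x := 1) (y := 'i) (z := 0)) /=; first ring.
by move=> k; case: (ord3P k) => ->; rewrite /cross /hpt /mk3 /=; ring: mulCii.
Qed.

Lemma line_through_lines1 : line_through (pt 0) (pt 3) = 'i%:MP * (lines a)`_1.
Proof.
rewrite (line_through_mk3 (c := 'i) (x := 1) (y := - 'i) (z := 0)) /=; first ring.
by move=> k; case: (ord3P k) => ->; rewrite /cross /hpt /mk3 /=; ring: mulCii.
Qed.

Lemma line_through_lines2 :
  line_through (pt 1) (pt 3) = (2 * 'i)%:MP * (lines a)`_2.
Proof.
rewrite (line_through_mk3 (c := 2 * 'i) (x := 1) (y := 0) (z := -1)) /=.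
  ring.
by move=> k; case: (ord3P k) => ->; rewrite /cross /hpt /mk3 /=; ring: mulCii.
Qed.

Lemma line_through_lines3 :
  line_through (pt 3) (pt 2) = (- 'i)%:MP * (lines a)`_3.
Proof.
rewrite (line_through_mk3 (c := - 'i) (x := a + 1) (y := (a - 1) * 'i)
  (z := - (2 * a))) /=; first ring.
by move=> k; case: (ord3P k) => ->; rewrite /cross /hpt /mk3 /=; ring: mulCii.
Qed.

Lemma line_through_lines4 : line_through (pt 1) (pt 4) = 'i%:MP * (lines a)`_4.
Proof.
rewrite (line_through_mk3 (c := 'i) (x := a + 1) (y := - ((a - 1) * 'i))
  (z := - (2 * a))) /=; first ring.
by move=> k; case: (ord3P k) => ->; rewrite /cross /hpt /mk3 /=; ring: mulCii.
Qed.

Lemma line_through_lines5 :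
  line_through (pt 2) (pt 4) = (2 * a * 'i)%:MP * (lines a)`_5.
Proof.
rewrite (line_through_mk3 (c := 2 * a * 'i) (x := 1) (y := 0) (z := - a)) /=.
  ring.
by move=> k; case: (ord3P k) => ->; rewrite /cross /hpt /mk3 /=; ring: mulCii.
Qed.

Lemma selfint_lines_lt0 L s : L \in lines a -> s != 0 ->
  (selfint a (Strict (s%:MP * L)) < 0)%R.
Proof.
case/(nthP 0) => j lt_j <- s0.
have lt0 k k' c : line_through (bpt a k) (bpt a k') = c%:MP * (lines a)`_j ->
    k != k' -> (selfint a (Strict (s%:MP * (lines a)`_j)) < 0)%R.
  by move=> LE kk'; apply: selfint_lt0_of_line_through LE kk' (bpt_neq kk') s0.
case: j lt_j lt0 => [|[|[|[|[|[|//]]]]]] _ lt0.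
- exact: lt0 line_through_lines0 isT.
- exact: lt0 line_through_lines1 isT.
- exact: lt0 line_through_lines2 isT.
- exact: lt0 line_through_lines3 isT.
- exact: lt0 line_through_lines4 isT.
- exact: lt0 line_through_lines5 isT.
Qed.

Lemma lerp_pt01 : lerp (pt 0) (pt 1) a = pt 2.
Proof. by rewrite /lerp /= !subr0 !add0r mulr1. Qed.

Lemma lerp_pt03 : lerp (pt 0) (pt 3) a = pt 4.
Proof. by rewrite /lerp /= !subr0 !add0r mulr1 mulrN. Qed.

Lemma sum_bpt (g : C * C -> nat) :
  (\sum_(k < 5) g (bpt a k) =
   g (pt 0) + g (pt 1) + g (pt 2) + g (pt 3) + g (pt 4))%N.
Proof. by rewrite !big_ord_recl big_ord0 addn0 !addnA. Qed.

Lemma line_or_selfint_ge0 F : plane_curve F ->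
  (exists L s, L \in lines a /\ s != 0 /\ F = s%:MP * L) \/
  (0 <= selfint a (Strict F))%R.
Proof.
move=> CF; have F0 : F != 0 by rewrite -msize_poly_eq0 -lt0n (ltn_trans _ CF.2.1).
have on_line j k k' c : (j < 6)%N ->
    line_through (bpt a k) (bpt a k') = c%:MP * (lines a)`_j ->
    (exists s, F = s%:MP * line_through (bpt a k) (bpt a k')) ->
    exists L s, L \in lines a /\ s != 0 /\ F = s%:MP * L.
  move=> lt_j LE [s FE]; have FE' : F = (s * c)%:MP * (lines a)`_j.
    by rewrite FE LE mulrA -rmorphM.
  exists (lines a)`_j, (s * c); rewrite mem_nth //; split=> //; split=> //.
  by apply: contraNneq F0 => sc0; rewrite FE' sc0 mpolyC0 mul0r.
have [/(on_line 0%N _ _ _ isT line_through_lines0)|B0] :=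
  mult_on_line3_le CF (@bpt_neq (o 0) (o 1) isT) a_neq0 a_neq1; first by left.
have [/(on_line 1%N _ _ _ isT line_through_lines1)|B1] :=
  mult_on_line3_le CF (@bpt_neq (o 0) (o 3) isT) a_neq0 a_neq1; first by left.
have [/(on_line 2%N _ _ _ isT line_through_lines2)|B2] :=
  mult_on_line2_le CF (@bpt_neq (o 1) (o 3) isT); first by left.
have [/(on_line 3%N _ _ _ isT line_through_lines3)|B3] :=
  mult_on_line2_le CF (@bpt_neq (o 3) (o 2) isT); first by left.
have [/(on_line 4%N _ _ _ isT line_through_lines4)|B4] :=
  mult_on_line2_le CF (@bpt_neq (o 1) (o 4) isT); first by left.
have [/(on_line 5%N _ _ _ isT line_through_lines5)|B5] :=
  mult_on_line2_le CF (@bpt_neq (o 2) (o 4) isT); first by left.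
right; rewrite /selfint subr_ge0 lez_nat (sum_bpt (fun P => mult F P ^ 2)%N).
rewrite lerp_pt01 in B0; rewrite lerp_pt03 in B1.
exact: sum_sq_le_of_line_bounds B0 B1 B2 B3 B4 B5.
Qed.

End BlowUp.

Unset Implicit Arguments.

Theorem lemma6p1 (a : C) (ha0 : a != 0) (ha1 : a != 1) (c : curve) :
  is_curve c ->
  ((selfint a c < 0)%R <->
   ((exists k : 'I_5, c = Exc k) \/
    (exists (F L : poly3) (s : C),
        c = Strict F /\ L \in lines a /\ s != 0 /\ F = s%:MP * L))).
Proof.
case: c => [k _ | F CF] /=.
  by split=> [_|_]; [left; exists k | rewrite ltrN10].
split=> [neg|[[k //]|[_ [L [s [[<-] [Ls [s0 ->]]]]]]]].
  right; have [[L [s [Ls [s0 FE]]]]|] := line_or_selfint_ge0 ha0 ha1 CF.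
    by exists F, L, s.
  by rewrite leNgt neg.
exact: selfint_lines_lt0.
Qed.
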